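(* Let $\mathcal D$ be universal, $\mathrm M=(M,d)\in\mathfrak U_{\mathcal D}$, $A,B\subseteq M$ finite with $A\cap B=\emptyset$, $s\in\mathbb N$, and for each $i<s$ let $\mathfrak t_i\subseteq\mathfrak s_i$ be Katětov functions of $\mathrm M$ with $\operatorname{dom}(\mathfrak t_i)=A$ and $\operatorname{dom}(\mathfrak s_i)=A\cup B$, such that $d(\mathfrak t_i,\mathfrak t_j)=d(\mathfrak s_i,\mathfrak s_j)$ for all $i,j<s$. Then there exists an isometric embedding $\alpha$ of $\mathrm M$ into $\mathrm M$ with $\alpha(x)=x$ for all $x\in A$ and $\alpha(x)\in\operatorname{orb}(\mathfrak s_i)$ for all $x\in\operatorname{orb}(\mathfrak t_i)$ and all $i<s$; equivalently $\operatorname{orb}_{\alpha(M)}(\mathfrak t_i)\subseteq\operatorname{orb}_{M}(\mathfrak s_i)$ for all $i<s$.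
   Context: $\mathcal D$ is a finite subset of $\mathbb R_{\ge0}$ containing $0$. $\mathfrak U_{\mathcal D}$ is the class of countable homogeneous metric spaces (every isometry between finite subspaces extends to an isometry of the space onto itself) with distance set exactly $\mathcal D$ into which every finite metric space with distances in $\mathcal D$ embeds isometrically; $\mathcal D$ is universal if this class is nonempty. A Katětov function of $\mathrm M$ is a map $\mathfrak t:F\to\mathcal D\setminus\{0\}$, $F\subseteq M$ finite, with $|\mathfrak t(x)-\mathfrak t(y)|\le d(x,y)\le\mathfrak t(x)+\mathfrak t(y)$ for all $x,y\in F$; $\operatorname{orb}_M(\mathfrak t)=\{y\in M\setminus F: d(y,x)=\mathfrak t(x)\ \forall x\in F\}$ and for $H\subseteq M$ containing $F$, $\operatorname{orb}_H(\mathfrak t)=\operatorname{orb}_M(\mathfrak t)\cap H$. $d(\mathfrak s,\mathfrak t)=\{d(x,y):x\in\operatorname{orb}_M(\mathfrak s),y\in\operatorname{orb}_M(\mathfrak t)\}$. *)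

From Stdlib Require Export Reals List.
Export ListNotations.
Open Scope R_scope.

Definition is_metric (X : Type) (d : X -> X -> R) : Prop :=
  (forall x y, 0 <= d x y) /\
  (forall x y, d x y = 0 <-> x = y) /\
  (forall x y, d x y = d y x) /\
  (forall x y z, d x z <= d x y + d y z).

Definition countable_type (X : Type) : Prop :=
  exists f : X -> nat, forall x y, f x = f y -> x = y.

(* Homogeneous: every isometry between finite subspaces (the finite subspace F,
   with the map f restricted to F) extends to an isometry of X onto itself. *)
Definition homogeneous (X : Type) (d : X -> X -> R) : Prop :=
  forall (F : list X) (f : X -> X),
    (forall x y, In x F -> In y F -> d (f x) (f y) = d x y) ->
    exists g : X -> X,
      (forall x y, d (g x) (g y) = d x y) /\
      (forall y, exists x, g x = y) /\
      (forall x, In x F -> g x = f x).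

Definition distance_set_is (D : list R) (X : Type) (d : X -> X -> R) : Prop :=
  (forall x y, In (d x y) D) /\ (forall r, In r D -> exists x y, d x y = r).

Definition finite_D_metric (D : list R) (n : nat) (e : nat -> nat -> R) : Prop :=
  (forall i j, (i < n)%nat -> (j < n)%nat -> In (e i j) D) /\
  (forall i j, (i < n)%nat -> (j < n)%nat -> 0 <= e i j) /\
  (forall i j, (i < n)%nat -> (j < n)%nat -> (e i j = 0 <-> i = j)) /\
  (forall i j, (i < n)%nat -> (j < n)%nat -> e i j = e j i) /\
  (forall i j k, (i < n)%nat -> (j < n)%nat -> (k < n)%nat ->
     e i k <= e i j + e j k).

Definition D_universal_space (D : list R) (X : Type) (d : X -> X -> R) : Prop :=
  forall (n : nat) (e : nat -> nat -> R), finite_D_metric D n e ->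
    exists h : nat -> X,
      forall i j, (i < n)%nat -> (j < n)%nat -> d (h i) (h j) = e i j.

Definition in_U (D : list R) (X : Type) (d : X -> X -> R) : Prop :=
  is_metric X d /\ countable_type X /\ homogeneous X d /\
  distance_set_is D X d /\ D_universal_space D X d.

Definition universal_D (D : list R) : Prop :=
  exists (X : Type) (d : X -> X -> R), in_U D X d.

(* Katetov function t with domain F (values of t outside F are irrelevant). *)
Definition katetov (D : list R) (X : Type) (d : X -> X -> R)
    (F : list X) (t : X -> R) : Prop :=
  (forall x, In x F -> In (t x) D /\ t x <> 0) /\
  (forall x y, In x F -> In y F ->
     Rabs (t x - t y) <= d x y /\ d x y <= t x + t y).

Definition orb (X : Type) (d : X -> X -> R) (F : list X) (t : X -> R) (y : X)
  : Prop :=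
  ~ In y F /\ forall x, In x F -> d y x = t x.

Definition orb_dist (X : Type) (d : X -> X -> R) (Fs : list X) (s : X -> R)
    (Ft : list X) (t : X -> R) (r : R) : Prop :=
  exists x y, orb X d Fs s x /\ orb X d Ft t y /\ d x y = r.

From Stdlib Require Import Reals Lra Lia List Classical ClassicalEpsilon.
Open Scope R_scope.

(* The embedding is built by a forth construction along an enumeration of M,
   through finite partial isometries [al] that fix A and send points of
   orb(t_i) into orb(s_i); each step realizes a finite Katetov pattern, which is
   possible in a space of U_D.  To keep the construction going, the image [al x]
   must moreover leave room, on B, for a point realizing s_j at distance d(x,c)
   for every c in orb(t_j); d(t_i,t_j) = d(s_i,s_j) is exactly what makes this
   hold for the images of orbit points.  For a point outside all orbits this
   condition is infinitary, but it only depends on the distances of the image to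
   B, which take finitely many values, so finitely many orbit points witness any
   failure; extending [al] to them first shows that no failure occurs. *)

Section Forth.
Variables (X Y : Type) (P : list X -> (X -> Y) -> Prop).
Variables (L0 : list X) (al0 : X -> Y).
Hypothesis HP0 : P L0 al0.
Hypothesis Hext : forall L al m, P L al ->
  exists al', P (m :: L) al' /\ forall z, In z L -> al' z = al z.
Variable en : X -> nat.
Hypothesis en_inj : forall x y, en x = en y -> x = y.

Local Notation state := (list X * (X -> Y))%type.

Definition extends_by (p : state) (m : X) (q : state) : Prop :=
  P (fst q) (snd q) /\ fst q = m :: fst p /\ forall z, In z (fst p) -> snd q z = snd p z.

Definition next_state (p : state) (m : X) : state :=
  epsilon (inhabits p) (extends_by p m).

Lemma next_state_spec (p : state) m : P (fst p) (snd p) -> extends_by p m (next_state p m).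
Proof.
  intros Hp. unfold next_state. apply epsilon_spec.
  destruct (Hext _ _ m Hp) as [al' [Hal' Hagree]]. now exists (m :: fst p, al').
Qed.

(* [pick n] is the point of index [n] when there is one, and arbitrary otherwise. *)
Definition pick (n : nat) : option X :=
  epsilon (inhabits None) (fun o => exists x, o = Some x /\ en x = n).

Fixpoint stage (n : nat) : state :=
  match n with
  | O => (L0, al0)
  | S k => match pick k with Some m => next_state (stage k) m | None => stage k end
  end.

Lemma stage_spec n : P (fst (stage n)) (snd (stage n)).
Proof.
  induction n as [|n IH]; simpl; [exact HP0|].
  destruct (pick n); [apply next_state_spec|]; exact IH.
Qed.

Lemma stage_succ n z : In z (fst (stage n)) ->
  In z (fst (stage (S n))) /\ snd (stage (S n)) z = snd (stage n) z.
Proof.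
  intros Hz. simpl. destruct (pick n) as [m|]; [|auto].
  destruct (next_state_spec (stage n) m (stage_spec n)) as [_ [-> Hagree]].
  split; [now right | now apply Hagree].
Qed.

Lemma stage_mono k n z : (k <= n)%nat -> In z (fst (stage k)) ->
  In z (fst (stage n)) /\ snd (stage n) z = snd (stage k) z.
Proof.
  intros Hkn Hz. induction Hkn as [|n _ [Hn En]]; [auto|].
  destruct (stage_succ n z Hn) as [Hn' En']. split; congruence.
Qed.

Lemma stage_covers x : In x (fst (stage (S (en x)))).
Proof.
  simpl. assert (Hpick : pick (en x) = Some x).
  { destruct (epsilon_spec (inhabits None)
       (fun o => exists y, o = Some y /\ en y = en x)) as [y [Ey Hy]]; [eauto|].
    unfold pick. rewrite Ey. f_equal. now apply en_inj. }
  rewrite Hpick. destruct (next_state_spec (stage (en x)) x (stage_spec (en x))) as [_ [-> _]].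
  now left.
Qed.

Lemma forth_limit : exists alpha : X -> Y, forall l : list X,
  exists L al, P L al /\ incl l L /\ forall z, In z L -> alpha z = al z.
Proof.
  exists (fun x => snd (stage (S (en x))) x). intros l.
  set (N := S (list_max (map en l))).
  exists (fst (stage N)), (snd (stage N)). split; [apply stage_spec|split].
  - intros x Hx. apply (stage_mono (S (en x)) N x); [|apply stage_covers].
    pose proof (proj1 (list_max_le (map en l) _) (le_n _)) as Hle.
    rewrite Forall_forall in Hle. specialize (Hle _ (in_map en l x Hx)). unfold N. lia.
  - intros z Hz. set (M := Nat.max N (S (en z))).
    destruct (stage_mono N M z (Nat.le_max_l _ _) Hz) as [_ E1].
    destruct (stage_mono (S (en z)) M z (Nat.le_max_r _ _) (stage_covers z)) as [_ E2].
    congruence.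
Qed.

End Forth.

Lemma finite_witness_cover {Y W V : Type} (Rel : Y -> Prop) (bad : W -> Y -> Prop)
  (profile : Y -> V) (Vs : list V) :
  (forall y y' w, profile y = profile y' -> bad w y -> bad w y') ->
  (forall y, Rel y -> exists w, bad w y) ->
  exists Ws : list W, (forall w, In w Ws -> exists y, bad w y) /\
    forall y, Rel y -> In (profile y) Vs -> exists w, In w Ws /\ bad w y.
Proof.
  intros Hprof Hbad. induction Vs as [|v Vs [Ws [HWs HVs]]].
  { exists []. split; [intros _ []|intros _ _ []]. }
  destruct (classic (exists y0, Rel y0 /\ profile y0 = v)) as [[y0 [Hy0 Ev]]|Hnone].
  - destruct (Hbad y0 Hy0) as [w0 Hw0].
    exists (w0 :: Ws). split.
    + intros w [<-|Hw]; eauto.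
    + intros y Hy [Ey|Hyv].
      * exists w0. split; [now left|]. apply (Hprof y0); congruence.
      * destruct (HVs y Hy Hyv) as [w [Hw Hwy]]. exists w. split; [now right|auto].
  - exists Ws. split; [exact HWs|]. intros y Hy [Ey|Hyv]; [|auto].
    exfalso. apply Hnone. eauto.
Qed.

Fixpoint tuples_over (D : list R) (n : nat) : list (list R) :=
  match n with
  | O => [[]]
  | S k => flat_map (fun r => map (cons r) (tuples_over D k)) D
  end.

Lemma tuples_over_complete (D vs : list R) :
  (forall v, In v vs -> In v D) -> In vs (tuples_over D (length vs)).
Proof.
  induction vs as [|v vs IH]; intros Hvs; simpl; [now left|].
  apply in_flat_map. exists v. split; [apply Hvs; now left|].
  apply in_map, IH. intros; apply Hvs; now right.
Qed.

Ltac unfold_Rabs := unfold Rabs in *; repeat match goal with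
  | |- context [Rcase_abs ?x] => destruct (Rcase_abs x)
  | H : context [Rcase_abs ?x] |- _ => destruct (Rcase_abs x) end.

Section Metric.
Variables (X : Type) (d : X -> X -> R).
Hypothesis Hd : is_metric X d.

Lemma dist_ge0 x y : 0 <= d x y.
Proof. apply Hd. Qed.

Lemma dist_eq0 x y : d x y = 0 <-> x = y.
Proof. apply Hd. Qed.

Lemma dist_sym x y : d x y = d y x.
Proof. apply Hd. Qed.

Lemma dist_triangle x y z : d x z <= d x y + d y z.
Proof. apply Hd. Qed.

Lemma dist_xx x : d x x = 0.
Proof. now apply dist_eq0. Qed.

Lemma dist_katetov u v w : Rabs (d u w - d v w) <= d u v /\ d u v <= d u w + d v w.
Proof.
  pose proof (dist_triangle u w v). pose proof (dist_triangle u v w).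
  pose proof (dist_triangle v u w). rewrite (dist_sym v w) in *. rewrite (dist_sym v u) in *.
  split; [unfold_Rabs|]; lra.
Qed.

End Metric.

Arguments dist_ge0 {X d} Hd x y.
Arguments dist_eq0 {X d} Hd x y.
Arguments dist_sym {X d} Hd x y.
Arguments dist_triangle {X d} Hd x y z.
Arguments dist_xx {X d} Hd x.
Arguments dist_katetov {X d} Hd u v w.

Lemma dedup_fst {A B : Type} (P : list (A * B)) : exists P', incl P' P /\
  NoDup (map fst P') /\ forall p, In p P -> exists q, In q P' /\ fst q = fst p.
Proof.
  induction P as [|p P [P' [Hincl [Hnd Hcov]]]].
  { exists []. repeat split; [intros _ []|constructor|intros _ []]. }
  destruct (classic (exists q, In q P' /\ fst q = fst p)) as [Hp|Hp].
  - exists P'. repeat split; [intros a Ha; right; auto|exact Hnd|].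
    intros q [<-|Hq]; auto.
  - exists (p :: P'). repeat split.
    + intros a [<-|Ha]; [now left|right; auto].
    + constructor; [|exact Hnd]. intros Hin. apply in_map_iff in Hin as [q [Eq Hq]].
      apply Hp. eauto.
    + intros q [<-|Hq]; [exists p; split; [now left|auto]|].
      destruct (Hcov q Hq) as [r [Hr Er]]. exists r. split; [now right|auto].
Qed.

Section Universal.
Variables (D : list R) (X : Type) (d : X -> X -> R).
Hypothesis HD0 : In 0 D.
Hypothesis HDnn : forall r, In r D -> 0 <= r.
Hypothesis HM : in_U D X d.

Let Hmet : is_metric X d := proj1 HM.

Lemma dist_in_D x y : In (d x y) D.
Proof. apply HM. Qed.

Lemma universal_inhabited : inhabited X.
Proof.
  pose proof HM as (_ & _ & _ & _ & Huniv).
  destruct (Huniv 1%nat (fun _ _ => 0)) as [h _]; [|exact (inhabits (h 0%nat))].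
  repeat split; intros; auto; lra || lia.
Qed.

Lemma homogeneous_transport n (h p : nat -> X) :
  (forall i j, (i < n)%nat -> (j < n)%nat -> d (p i) (p j) = d (h i) (h j)) ->
  exists g : X -> X, (forall x y, d (g x) (g y) = d x y) /\
    forall i, (i < n)%nat -> g (h i) = p i.
Proof.
  intros Hhp. pose proof HM as (_ & _ & Hhom & _).
  set (f := fun x => p (epsilon (inhabits 0%nat) (fun i => (i < n)%nat /\ h i = x))).
  assert (Hf : forall i, (i < n)%nat -> f (h i) = p i).
  { intros i Hi. unfold f.
    destruct (epsilon_spec (inhabits 0%nat) (fun k => (k < n)%nat /\ h k = h i))
      as [Hk Ek]; [eauto|].
    apply (dist_eq0 Hmet). rewrite Hhp, Ek by auto. apply (dist_xx Hmet). }
  destruct (Hhom (map h (seq 0 n)) f) as [g [Hg [_ Hgf]]].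
  - intros x y Hx Hy.
    apply in_map_iff in Hx as [i [<- Hi]]. apply in_map_iff in Hy as [j [<- Hj]].
    apply in_seq in Hi, Hj. rewrite !Hf by lia. apply Hhp; lia.
  - exists g. split; [exact Hg|]. intros i Hi. rewrite Hgf; [now apply Hf|].
    apply in_map, in_seq. lia.
Qed.

Definition one_point_ext (p : nat -> X) (v : nat -> R) (n i j : nat) : R :=
  if Nat.eqb i n then (if Nat.eqb j n then 0 else v j)
  else if Nat.eqb j n then v i else d (p i) (p j).

Lemma one_point_ext_metric n (p : nat -> X) (v : nat -> R) :
  (forall i j, (i < n)%nat -> (j < n)%nat -> p i = p j -> i = j) ->
  (forall i, (i < n)%nat -> In (v i) D /\ 0 < v i) ->
  (forall i j, (i < n)%nat -> (j < n)%nat ->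
     Rabs (v i - v j) <= d (p i) (p j) /\ d (p i) (p j) <= v i + v j) ->
  finite_D_metric D (S n) (one_point_ext p v n).
Proof.
  intros Hinj Hv HK. unfold one_point_ext.
  repeat split; intros;
    repeat match goal with
      | |- context [Nat.eqb ?a n] => destruct (Nat.eqb_spec a n)
      | H : context [Nat.eqb ?a n] |- _ => destruct (Nat.eqb_spec a n)
      | H : ?a <> n, Ha : (?a < S n)%nat |- _ => assert (a < n)%nat by lia; clear H Ha
      end; subst;
    repeat match goal with
      | H : (?a < n)%nat |- _ =>
          lazymatch goal with _ : In (v a) D /\ _ |- _ => fail | _ => pose proof (Hv a H) end
      | H : (?a < n)%nat, H' : (?b < n)%nat |- _ =>
          lazymatch goal with _ : Rabs (v a - v b) <= _ /\ _ |- _ => fail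
          | _ => pose proof (HK a b H H') end
      end;
    repeat match goal with H : _ /\ _ |- _ => destruct H end;
    solve [ reflexivity | assumption | lia | lra | apply dist_in_D
              | apply (dist_ge0 Hmet) | apply (dist_xx Hmet) | apply (dist_sym Hmet)
              | apply (dist_triangle Hmet) | apply Hinj; auto; now apply (dist_eq0 Hmet)
              | unfold_Rabs; lra ].
Qed.

Definition katetov_pattern (P : list (X * R)) : Prop :=
  (forall p, In p P -> In (snd p) D) /\
  (forall p q, In p P -> In q P ->
     Rabs (snd p - snd q) <= d (fst p) (fst q) /\ d (fst p) (fst q) <= snd p + snd q).

Lemma katetov_pattern_realized_pos (P : list (X * R)) :
  katetov_pattern P -> NoDup (map fst P) -> (forall p, In p P -> snd p <> 0) ->
  exists y, forall p, In p P -> d y (fst p) = snd p.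
Proof.
  intros [HPD HPK] Hnd Hnz. destruct universal_inhabited as [x0].
  pose proof HM as (_ & _ & _ & _ & Huniv).
  set (n := length P).
  set (pt := fun i => fst (nth i P (x0, 0))).
  set (v := fun i => snd (nth i P (x0, 0))).
  assert (Hnth : forall i, (i < n)%nat -> In (nth i P (x0, 0)) P) by (intros; now apply nth_In).
  destruct (Huniv (S n) (one_point_ext pt v n)) as [h Hh].
  { apply one_point_ext_metric.
    - intros i j Hi Hj E. rewrite (NoDup_nth (map fst P) x0) in Hnd.
      apply Hnd; rewrite ?length_map; auto. now rewrite !(map_nth fst P (x0, 0)).
    - intros i Hi. split; [now apply HPD, Hnth|].
      pose proof (HDnn _ (HPD _ (Hnth i Hi))). pose proof (Hnz _ (Hnth i Hi)).
      unfold v. lra.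
    - intros i j Hi Hj. now apply HPK; apply Hnth. }
  assert (Hh_old : forall i j, (i < n)%nat -> (j < n)%nat -> d (pt i) (pt j) = d (h i) (h j)).
  { intros i j Hi Hj. rewrite Hh by lia. unfold one_point_ext.
    destruct (Nat.eqb_spec i n), (Nat.eqb_spec j n); lia || reflexivity. }
  destruct (homogeneous_transport n h pt Hh_old) as [g [Hg Hgh]].
  exists (g (h n)). intros p Hp.
  destruct (In_nth P p (x0, 0) Hp) as [i [Hi <-]].
  change (fst (nth i P (x0, 0))) with (pt i). rewrite <- (Hgh i Hi), Hg, Hh by lia.
  unfold one_point_ext. rewrite Nat.eqb_refl.
  destruct (Nat.eqb_spec i n); [lia|reflexivity].
Qed.

(* Zero values are allowed: the point carrying a zero value is then the realizer. *)
Lemma katetov_pattern_realized (P : list (X * R)) :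
  katetov_pattern P -> exists y, forall p, In p P -> d y (fst p) = snd p.
Proof.
  intros [HPD HPK].
  destruct (classic (exists p, In p P /\ snd p = 0)) as [[p [Hp E]]|Hnz].
  - exists (fst p). intros q Hq. destruct (HPK p q Hp Hq) as [H1 H2].
    pose proof (HDnn _ (HPD q Hq)). rewrite E in *. unfold_Rabs; lra.
  - destruct (dedup_fst P) as [P' [Hincl [Hnd Hcov]]].
    destruct (katetov_pattern_realized_pos P') as [y Hy]; auto.
    + split; intros; apply HPD || apply HPK; auto.
    + intros p Hp E. apply Hnz. eauto.
    + exists y. intros p Hp. destruct (Hcov p Hp) as [q [Hq Eq]].
      rewrite <- Eq, Hy by auto.
      destruct (HPK p q Hp (Hincl _ Hq)) as [H1 _]. rewrite Eq, (dist_xx Hmet) in H1.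
      unfold_Rabs; lra.
Qed.

Lemma isometric_image_katetov (f : X -> X) (L : list X) (m : X) :
  (forall x z, In x L -> In z L -> d (f x) (f z) = d x z) ->
  katetov_pattern (map (fun x => (f x, d m x)) L).
Proof.
  intros Hf. split.
  - intros p Hp. apply in_map_iff in Hp as [x [<- _]]. apply dist_in_D.
  - intros p q Hp Hq. apply in_map_iff in Hp as [x [<- Hx]].
    apply in_map_iff in Hq as [z [<- Hz]]. simpl. rewrite Hf by auto.
    rewrite (dist_sym Hmet m x), (dist_sym Hmet m z). apply (dist_katetov Hmet).
Qed.

Section Construction.
Variables (A B : list X) (s : nat) (t ss : nat -> X -> R).
Hypothesis Ht : forall i, (i < s)%nat -> katetov D X d A (t i).
Hypothesis Hs : forall i, (i < s)%nat -> katetov D X d (A ++ B) (ss i).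
Hypothesis Hts : forall i, (i < s)%nat -> forall x, In x A -> ss i x = t i x.
Hypothesis Hdist : forall i j, (i < s)%nat -> (j < s)%nat -> forall r,
  orb_dist X d A (t i) A (t j) r <-> orb_dist X d (A ++ B) (ss i) (A ++ B) (ss j) r.

(* A point realizing [ss j] on [B] may be placed at distance [r] from [y]. *)
Definition compatible (j : nat) (y : X) (r : R) : Prop :=
  forall b, In b B -> Rabs (d y b - ss j b) <= r /\ r <= d y b + ss j b.

Lemma orb_pair_katetov i j x c b : (i < s)%nat -> (j < s)%nat ->
  orb X d A (t i) x -> orb X d A (t j) c -> In b B ->
  Rabs (ss i b - ss j b) <= d x c /\ d x c <= ss i b + ss j b.
Proof.
  intros Hi Hj Hx Hc Hb.
  destruct (proj1 (Hdist i j Hi Hj (d x c))) as [u [v [[_ Hu] [[_ Hv] E]]]]; [now exists x, c|].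
  rewrite <- (Hu b), <- (Hv b), <- E by (apply in_or_app; auto).
  apply (dist_katetov Hmet).
Qed.

Lemma orb_ss_unique i j x b : (i < s)%nat -> (j < s)%nat ->
  orb X d A (t i) x -> orb X d A (t j) x -> In b B -> ss i b = ss j b.
Proof.
  intros Hi Hj Hxi Hxj Hb. destruct (orb_pair_katetov i j x x b) as [K _]; auto.
  rewrite (dist_xx Hmet) in K. unfold_Rabs; lra.
Qed.

(* The last clause keeps room for mapping later points of the orbits of the [t j]. *)
Record admissible (L : list X) (al : X -> X) : Prop := {
  adm_A : incl A L;
  adm_fix : forall a, In a A -> al a = a;
  adm_iso : forall x y, In x L -> In y L -> d (al x) (al y) = d x y;
  adm_orb : forall i x, (i < s)%nat -> In x L -> orb X d A (t i) x ->
              forall b, In b B -> d (al x) b = ss i b;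
  adm_compat : forall j x c, (j < s)%nat -> In x L -> orb X d A (t j) c ->
              compatible j (al x) (d x c) }.

Lemma admissible_init : admissible A (fun x => x).
Proof.
  split; auto.
  - apply incl_refl.
  - intros i x _ Hx [Hn _]. contradiction.
  - intros j a c Hj Ha [_ Hc] b Hb.
    rewrite (dist_sym Hmet a c), Hc, <- Hts by auto.
    destruct (Hs j Hj) as [_ HK].
    destruct (HK a b) as [K1 K2]; try (apply in_or_app; auto).
    split; unfold_Rabs; lra.
Qed.

Definition upd (al : X -> X) (m y : X) : X -> X :=
  fun z => if excluded_middle_informative (z = m) then y else al z.

Lemma upd_here al m y : upd al m y m = y.
Proof. unfold upd. now destruct (excluded_middle_informative (m = m)). Qed.

Lemma upd_other al m y z : z <> m -> upd al m y z = al z.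
Proof. unfold upd. now destruct (excluded_middle_informative (z = m)). Qed.

Lemma admissible_cons_in L al m : In m L -> admissible L al -> admissible (m :: L) al.
Proof.
  intros Hm [HA Hfix Hiso Horb Hcompat]. split; auto.
  - intros a Ha. right; auto.
  - intros x y [<-|Hx] [<-|Hy]; auto.
  - intros i x Hi [<-|Hx]; eauto.
  - intros j x c Hj [<-|Hx]; eauto.
Qed.

Lemma admissible_cons_upd L al m y : admissible L al -> ~ In m L ->
  (forall x, In x L -> d y (al x) = d m x) ->
  (forall i, (i < s)%nat -> orb X d A (t i) m -> forall b, In b B -> d y b = ss i b) ->
  (forall j c, (j < s)%nat -> orb X d A (t j) c -> compatible j y (d m c)) ->
  admissible (m :: L) (upd al m y).
Proof.
  intros [HA Hfix Hiso Horb Hcompat] HmL Hy_L Hy_orb Hy_compat.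
  assert (Hne : forall x, In x L -> x <> m) by (intros x Hx ->; contradiction).
  split.
  - intros a Ha. right; auto.
  - intros a Ha. rewrite upd_other; auto.
  - intros x z [<-|Hx] [<-|Hz].
    + now rewrite upd_here, !(dist_xx Hmet).
    + rewrite upd_here, upd_other by auto. auto.
    + rewrite upd_here, upd_other by auto. rewrite (dist_sym Hmet), Hy_L by auto.
      apply (dist_sym Hmet).
    + rewrite !upd_other by auto. auto.
  - intros i x Hi [<-|Hx] Hxi b Hb.
    + rewrite upd_here. auto.
    + rewrite upd_other by auto. eauto.
  - intros j x c Hj [<-|Hx] Hc.
    + rewrite upd_here. auto.
    + rewrite upd_other by auto. auto.
Qed.

Lemma admissible_extend_orbit L al i m : admissible L al -> (i < s)%nat ->
  orb X d A (t i) m ->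
  exists al', admissible (m :: L) al' /\ forall z, In z L -> al' z = al z.
Proof.
  intros Hadm Hi Hm.
  destruct (classic (In m L)) as [HmL|HmL]; [exists al; split; auto; now apply admissible_cons_in|].
  destruct (Hs i Hi) as [HsD HsK].
  destruct (katetov_pattern_realized
              (map (fun x => (al x, d m x)) L ++ map (fun b => (b, ss i b)) B)) as [y Hy].
  { destruct (isometric_image_katetov al L m (adm_iso _ _ Hadm)) as [K1 K2].
    split.
    - intros p Hp. apply in_app_or in Hp as [Hp|Hp]; auto.
      apply in_map_iff in Hp as [b [<- Hb]]. apply HsD, in_or_app; auto.
    - intros p q Hp Hq.
      apply in_app_or in Hp as [Hp|Hp]; apply in_app_or in Hq as [Hq|Hq]; auto;
        apply in_map_iff in Hp as [x [<- Hx]]; apply in_map_iff in Hq as [z [<- Hz]]; simpl.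
      + destruct (adm_compat _ _ Hadm i x m Hi Hx Hm z Hz).
        rewrite (dist_sym Hmet m x). split; unfold_Rabs; lra.
      + destruct (adm_compat _ _ Hadm i z m Hi Hz Hm x Hx).
        rewrite (dist_sym Hmet m z), (dist_sym Hmet x). split; unfold_Rabs; lra.
      + apply HsK; apply in_or_app; auto. }
  exists (upd al m y). split; [|intros z Hz; apply upd_other; intros ->; contradiction].
  apply admissible_cons_upd; auto.
  - intros x Hx. apply (Hy (al x, d m x)), in_or_app; left. apply in_map_iff; eauto.
  - intros j Hj Hmj b Hb. rewrite (orb_ss_unique j i m b) by auto.
    apply (Hy (b, ss i b)), in_or_app; right. apply in_map_iff; eauto.
  - intros j c Hj Hc b Hb.
    replace (d y b) with (ss i b) by (symmetry; apply (Hy (b, ss i b)), in_or_app; right;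
                                      apply in_map_iff; eauto).
    now apply orb_pair_katetov.
Qed.

Lemma admissible_extend_orbits (W : list (nat * X)) L al :
  (forall w, In w W -> (fst w < s)%nat /\ orb X d A (t (fst w)) (snd w)) ->
  admissible L al ->
  exists al', admissible (map snd W ++ L) al' /\ forall z, In z L -> al' z = al z.
Proof.
  induction W as [|w W IH]; intros HW Hadm; [now exists al|].
  destruct IH as [al1 [Hadm1 Hagree1]]; [intros; apply HW; now right|auto|].
  destruct (HW w (or_introl eq_refl)) as [Hw1 Hw2].
  destruct (admissible_extend_orbit _ _ _ _ Hadm1 Hw1 Hw2) as [al2 [Hadm2 Hagree2]].
  exists al2. split; [exact Hadm2|]. intros z Hz.
  rewrite Hagree2, Hagree1; auto. apply in_or_app; auto.
Qed.

Lemma free_point_target L al m : admissible L al ->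
  exists y, (forall x, In x L -> d y (al x) = d m x) /\
    forall j c, (j < s)%nat -> orb X d A (t j) c -> compatible j y (d m c).
Proof.
  intros Hadm. apply NNPP. intros Hno.
  set (bad := fun (w : nat * X) y => (fst w < s)%nat /\ orb X d A (t (fst w)) (snd w) /\
                                     ~ compatible (fst w) y (d m (snd w))).
  destruct (finite_witness_cover (fun y => forall x, In x L -> d y (al x) = d m x) bad
              (fun y => map (d y) B) (tuples_over D (length B))) as [W [HW Hcover]].
  - intros y y' [j c] Ey [Hj [Hc Hbad]]. split; [|split]; auto.
    intros Hy'. apply Hbad. intros b Hb.
    rewrite (ext_in_map Ey b Hb). apply Hy', Hb.
  - intros y Hy. apply NNPP. intros Hgood. apply Hno. exists y. split; [exact Hy|].
    intros j c Hj Hc. apply NNPP. intros Hcomp. apply Hgood. now exists (j, c).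
  - destruct (admissible_extend_orbits W L al) as [al' [Hadm' Hagree]]; auto.
    { intros w Hw. destruct (HW w Hw) as [y [Hj [Hc _]]]. auto. }
    destruct (katetov_pattern_realized (map (fun z => (al' z, d m z)) (map snd W ++ L)))
      as [y Hy]; [apply isometric_image_katetov, (adm_iso _ _ Hadm')|].
    assert (Hy_dom : forall z, In z (map snd W ++ L) -> d y (al' z) = d m z).
    { intros z Hz. apply (Hy (al' z, d m z)), in_map_iff. eauto. }
    destruct (Hcover y) as [[j c] [Hw [Hj [Hc Hbad]]]].
    + intros x Hx. rewrite <- Hagree by auto. apply Hy_dom, in_or_app; auto.
    + rewrite <- (length_map (d y) B). apply tuples_over_complete.
      intros v Hv. apply in_map_iff in Hv as [b [<- _]]. apply dist_in_D.
    + apply Hbad. simpl in *. intros b Hb.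
      assert (Hcdom : In c (map snd W ++ L)) by (apply in_or_app; left; exact (in_map snd W _ Hw)).
      rewrite <- (Hy_dom c Hcdom), <- (adm_orb _ _ Hadm' j c Hj Hcdom Hc b Hb).
      apply (dist_katetov Hmet).
Qed.

Lemma admissible_extend L al m : admissible L al ->
  exists al', admissible (m :: L) al' /\ forall z, In z L -> al' z = al z.
Proof.
  intros Hadm.
  destruct (classic (In m L)) as [HmL|HmL]; [exists al; split; auto; now apply admissible_cons_in|].
  destruct (classic (exists i, (i < s)%nat /\ orb X d A (t i) m)) as [[i [Hi Hm]]|Hfree].
  { now apply (admissible_extend_orbit L al i m). }
  destruct (free_point_target L al m Hadm) as [y [Hy_L Hy_compat]].
  exists (upd al m y). split; [|intros z Hz; apply upd_other; intros ->; contradiction].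
  apply admissible_cons_upd; auto.
  intros i Hi Hm. exfalso. eauto.
Qed.

Lemma admissible_orb L al i x : admissible L al -> In x L -> (i < s)%nat ->
  orb X d A (t i) x -> orb X d (A ++ B) (ss i) (al x).
Proof.
  intros Hadm Hx Hi [HxA HxdA].
  destruct (Ht i Hi) as [HtD _]. destruct (Hs i Hi) as [HsD _].
  assert (Hal_A : forall a, In a A -> d (al x) a = t i a).
  { intros a Ha. rewrite <- (adm_fix _ _ Hadm a Ha) at 1.
    rewrite (adm_iso _ _ Hadm) by (auto; now apply (adm_A _ _ Hadm)). auto. }
  split.
  - intros Hin. apply in_app_or in Hin as [Ha|Hb].
    + apply (proj2 (HtD _ Ha)). rewrite <- Hal_A, (dist_xx Hmet); auto.
    + apply (proj2 (HsD _ (in_or_app _ _ _ (or_intror Hb)))).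
      rewrite <- (adm_orb _ _ Hadm i x Hi Hx (conj HxA HxdA) _ Hb), (dist_xx Hmet); auto.
  - intros z Hz. apply in_app_or in Hz as [Ha|Hb].
    + rewrite Hal_A, Hts; auto.
    + now apply (adm_orb _ _ Hadm i x).
Qed.

Lemma admissible_limit : exists alpha : X -> X, forall l : list X,
  exists L al, admissible L al /\ incl l L /\ forall z, In z L -> alpha z = al z.
Proof.
  pose proof HM as (_ & [en en_inj] & _).
  exact (forth_limit X X admissible A (fun x => x) admissible_init admissible_extend en en_inj).
Qed.

End Construction. End Universal.

Theorem theorem5p1
  (D : list R)
  (HD0 : In 0 D) (HDnn : forall r, In r D -> 0 <= r)
  (HDuniv : universal_D D)
  (X : Type) (d : X -> X -> R) (HM : in_U D X d)
  (A B : list X) (HAB : forall x, In x A -> ~ In x B)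
  (s : nat) (t ss : nat -> X -> R)
  (Ht : forall i, (i < s)%nat -> katetov D X d A (t i))
  (Hs : forall i, (i < s)%nat -> katetov D X d (A ++ B) (ss i))
  (Hts : forall i, (i < s)%nat -> forall x, In x A -> ss i x = t i x)
  (Hdist : forall i j, (i < s)%nat -> (j < s)%nat -> forall r,
      orb_dist X d A (t i) A (t j) r <-> orb_dist X d (A ++ B) (ss i) (A ++ B) (ss j) r) :
  exists alpha : X -> X,
    (forall x y, d (alpha x) (alpha y) = d x y) /\
    (forall x, In x A -> alpha x = x) /\
    (forall i, (i < s)%nat -> forall x, orb X d A (t i) x -> orb X d (A ++ B) (ss i) (alpha x)).
Proof.
  destruct (admissible_limit D X d HD0 HDnn HM A B s t ss Hs Hts Hdist) as [alpha Halpha].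
  exists alpha. split; [|split].
  - intros x y. destruct (Halpha [x; y]) as (L & al & Hadm & Hxy & Hagree).
    assert (Hx : In x L) by (apply Hxy; simpl; auto).
    assert (Hy : In y L) by (apply Hxy; simpl; auto).
    rewrite !Hagree by assumption. now apply (adm_iso _ _ _ _ _ _ _ _ _ Hadm).
  - intros a Ha. destruct (Halpha []) as (L & al & Hadm & _ & Hagree).
    rewrite Hagree by now apply (adm_A _ _ _ _ _ _ _ _ _ Hadm).
    now apply (adm_fix _ _ _ _ _ _ _ _ _ Hadm).
  - intros i Hi x Hx. destruct (Halpha [x]) as (L & al & Hadm & Hxl & Hagree).
    assert (HxL : In x L) by (apply Hxl; now left).
    rewrite Hagree by exact HxL. now apply (admissible_orb D X d HM A B s t ss Ht Hs Hts L al).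
Qed.
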